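(* Let $C\in\mathbb{R}^{p\times p}$ be positive definite, $w\in\mathbb{R}^p$, $\mu>0$. For $\tau>0$ let $\hat u_\tau\in(-\mu,\mu)^p$ be the unique real solution of $(\mu^2-u_j^2)[C^{-1}(w-u)]_j-u_j/\tau=0$ ($j=1,\dots,p$), and let $\hat x_\tau=C^{-1}(w-\hat u_\tau)$. Let $\hat u=\lim_{\tau\to\infty}\hat u_\tau$ and $\hat x=C^{-1}(w-\hat u)$, and define $I=\{j:\hat x_j\neq0\}$, $I^c_t=\{j\notin I:|\hat u_j|=\mu\}$ and $I^c_{nt}=\{j\notin I:|\hat u_j|<\mu\}$. Then, as $\tau\to\infty$, $$\tau(\mu^2-\hat u_{\tau,j}^2)^2=\begin{cases}O(\tau^{-1}) & j\in I,\\ O\bigl[(\tau\hat x_{\tau,j}^2)^{-1}\bigr] & j\in I^c_t,\\ O(\tau) & j\in I^c_{nt}.\end{cases}$$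
   Context: Standing facts of the setting: $\hat u_\tau\to\hat u$ as $\tau\to\infty$, where $\hat u$ is the unique minimizer of $(w-u)^TC^{-1}(w-u)$ over the box $\{u\in\mathbb{R}^p:|u_j|\le\mu\ \forall j\}$; then $\hat x=C^{-1}(w-\hat u)$ is the unique minimizer of $H(x)=x^TCx-2w^Tx+2\mu\|x\|_1$, and $\hat x_\tau\to\hat x$. $I$ is the set of nonzero coordinates of $\hat x$; $I^c_t$ are the ''transition'' coordinates (zero in $\hat x$ but with $|\hat u_j|=\mu$) and $I^c_{nt}$ the non-transition zero coordinates. *)

(* real analysis (limits tau -> infinity) over Stdlib R.
   Vectors in R^p are functions nat -> R (only indices < p matter);
   p x p matrices are functions nat -> nat -> R. *)
From Stdlib Require Import Reals Lra Lia.
Open Scope R_scope.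

Fixpoint rsum (n : nat) (f : nat -> R) : R :=
  match n with O => 0 | S k => rsum k f + f k end.

Definition matvec (p : nat) (A : nat -> nat -> R) (v : nat -> R) (i : nat) : R :=
  rsum p (fun k => A i k * v k).

Definition pos_def (p : nat) (C : nat -> nat -> R) : Prop :=
  (forall i j, (i < p)%nat -> (j < p)%nat -> C i j = C j i) /\
  (forall x : nat -> R, (exists i, (i < p)%nat /\ x i <> 0) ->
     rsum p (fun i => x i * matvec p C x i) > 0).

Definition is_inverse (p : nat) (A B : nat -> nat -> R) : Prop :=
  forall i j, (i < p)%nat -> (j < p)%nat ->
    rsum p (fun k => A i k * B k j) = if Nat.eq_dec i j then 1 else 0.

Definition bigO_infty (f g : R -> R) : Prop :=
  exists K T : R, forall tau, tau > T -> Rabs (f tau) <= K * Rabs (g tau).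

(* The stationarity equation of coordinate j says exactly
   [tau (mu^2 - u_j^2) x_j = u_j], with [|u_j| < mu].  Squaring gives
   [tau (mu^2 - u_j^2)^2 * (tau x_j^2) = u_j^2 <= mu^2], which is the bound on
   I^c_t; on I the factor [x_j] stays away from 0 because it converges to
   [xh_j <> 0], so [tau (mu^2 - u_j^2)^2 <= mu^2 / (tau x_j^2) = O(1/tau)]; on
   I^c_nt the trivial bound [0 <= mu^2 - u_j^2 <= mu^2] suffices. *)

From Stdlib Require Import Reals Lra Lia.
Open Scope R_scope.

Definition cvg_infty (f : R -> R) (l : R) : Prop :=
  forall eps, eps > 0 -> exists T, forall tau, tau > T -> Rabs (f tau - l) < eps.

Lemma cvg_infty_const (c : R) : cvg_infty (fun _ => c) c.
Proof.
  intros eps Heps; exists 0; intros tau _.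
  rewrite Rminus_diag, Rabs_R0; lra.
Qed.

Lemma cvg_infty_plus (f g : R -> R) (l m : R) :
  cvg_infty f l -> cvg_infty g m -> cvg_infty (fun tau => f tau + g tau) (l + m).
Proof.
  intros Hf Hg eps Heps.
  destruct (Hf (eps / 2) ltac:(lra)) as [Tf HTf].
  destruct (Hg (eps / 2) ltac:(lra)) as [Tg HTg].
  exists (Rmax Tf Tg); intros tau Htau.
  specialize (HTf tau ltac:(pose proof (Rmax_l Tf Tg); lra)).
  specialize (HTg tau ltac:(pose proof (Rmax_r Tf Tg); lra)).
  replace (f tau + g tau - (l + m)) with ((f tau - l) + (g tau - m)) by ring.
  pose proof (Rabs_triang (f tau - l) (g tau - m)); lra.
Qed.

Lemma cvg_infty_scal (c : R) (f : R -> R) (l : R) :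
  cvg_infty f l -> cvg_infty (fun tau => c * f tau) (c * l).
Proof.
  intros Hf eps Heps.
  assert (Hc : Rabs c + 1 > 0) by (pose proof (Rabs_pos c); lra).
  destruct (Hf (eps / (Rabs c + 1))) as [T HT].
  { apply Rlt_gt, Rdiv_lt_0_compat; lra. }
  exists T; intros tau Htau; specialize (HT tau Htau).
  rewrite <- Rmult_minus_distr_l, Rabs_mult.
  apply Rle_lt_trans with ((Rabs c + 1) * Rabs (f tau - l)).
  - pose proof (Rabs_pos (f tau - l)); nra.
  - replace eps with ((Rabs c + 1) * (eps / (Rabs c + 1))) by (field; lra).
    apply Rmult_lt_compat_l; lra.
Qed.

Lemma cvg_infty_const_minus (c : R) (f : R -> R) (l : R) :
  cvg_infty f l -> cvg_infty (fun tau => c - f tau) (c - l).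
Proof.
  intros Hf eps Heps; destruct (Hf eps Heps) as [T HT]; exists T.
  intros tau Htau; replace (c - f tau - (c - l)) with (- (f tau - l)) by ring.
  rewrite Rabs_Ropp; auto.
Qed.

Lemma cvg_infty_rsum (n : nat) (f : nat -> R -> R) (l : nat -> R) :
  (forall k, (k < n)%nat -> cvg_infty (f k) (l k)) ->
  cvg_infty (fun tau => rsum n (fun k => f k tau)) (rsum n l).
Proof.
  induction n as [|n IH]; intros Hf; simpl.
  - apply cvg_infty_const.
  - apply cvg_infty_plus; [apply IH; intros k Hk|]; apply Hf; lia.
Qed.

Lemma cvg_infty_matvec (p : nat) (A : nat -> nat -> R) (v : R -> nat -> R)
  (l : nat -> R) (i : nat) :
  (forall k, (k < p)%nat -> cvg_infty (fun tau => v tau k) (l k)) ->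
  cvg_infty (fun tau => matvec p A (v tau) i) (matvec p A l i).
Proof.
  intros Hv; apply (cvg_infty_rsum p (fun k tau => A i k * v tau k)).
  intros k Hk; apply cvg_infty_scal, Hv, Hk.
Qed.

Lemma cvg_infty_sq_bounded_below (f : R -> R) (l : R) :
  cvg_infty f l -> l <> 0 -> exists T, forall tau, tau > T -> l ^ 2 / 4 <= f tau ^ 2.
Proof.
  intros Hf Hl.
  destruct (Hf (Rabs l / 2)) as [T HT].
  { pose proof (Rabs_pos_lt l Hl); lra. }
  exists T; intros tau Htau; specialize (HT tau Htau).
  assert (Hhalf : Rabs l / 2 <= Rabs (f tau)).
  { pose proof (Rabs_triang_inv l (f tau)).
    rewrite Rabs_minus_sym in HT; lra. }
  rewrite <- (pow2_abs (f tau)), <- (pow2_abs l).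
  pose proof (Rabs_pos l); nra.
Qed.

Lemma stationary_scaled_gap (mu u x tau : R) :
  tau > 0 -> (mu ^ 2 - u ^ 2) * x - u / tau = 0 ->
  tau * (mu ^ 2 - u ^ 2) * x = u.
Proof.
  intros Htau Hstat.
  replace u with (tau * (u / tau)) at 2 by (field; lra).
  rewrite <- (Rminus_diag_uniq _ _ Hstat); ring.
Qed.

Section ScaledGapBounds.

Variables mu u x tau : R.
Hypothesis Htau : tau > 0.
Hypothesis Hu : - mu < u < mu.

Lemma gap_sq_bound : tau * (mu ^ 2 - u ^ 2) ^ 2 <= mu ^ 4 * tau.
Proof.
  assert (0 <= mu ^ 2 - u ^ 2 <= mu ^ 2) by nra.
  replace (mu ^ 4) with ((mu ^ 2) ^ 2) by ring.
  rewrite (Rmult_comm _ tau); apply Rmult_le_compat_l; nra.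
Qed.

Hypothesis Hid : tau * (mu ^ 2 - u ^ 2) * x = u.

Lemma gap_sq_mul_tau_sq_bound :
  tau * (mu ^ 2 - u ^ 2) ^ 2 * (tau * x ^ 2) <= mu ^ 2.
Proof.
  replace (tau * (mu ^ 2 - u ^ 2) ^ 2 * (tau * x ^ 2))
    with ((tau * (mu ^ 2 - u ^ 2) * x) ^ 2) by ring.
  rewrite Hid; nra.
Qed.

Lemma gap_sq_bound_inv (c : R) :
  c > 0 -> c <= x ^ 2 -> tau * (mu ^ 2 - u ^ 2) ^ 2 <= mu ^ 2 / c * / tau.
Proof.
  intros Hc Hcx.
  pose proof gap_sq_mul_tau_sq_bound as Hb.
  set (g := tau * (mu ^ 2 - u ^ 2) ^ 2) in *.
  assert (Hg : 0 <= g) by (apply Rmult_le_pos; [lra | apply pow2_ge_0]).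
  apply Rmult_le_reg_r with (c * tau); [nra|].
  replace (mu ^ 2 / c * / tau * (c * tau)) with (mu ^ 2) by (field; lra).
  apply Rle_trans with (g * (tau * x ^ 2)); [|exact Hb].
  apply Rmult_le_compat_l; [exact Hg|].
  rewrite (Rmult_comm c); apply Rmult_le_compat_l; lra.
Qed.

End ScaledGapBounds.

Theorem lemma2 (p : nat) (C Ci : nat -> nat -> R) (w : nat -> R) (mu : R)
  (ut : R -> nat -> R) (uh : nat -> R) :
  pos_def p C ->
  is_inverse p C Ci ->
  mu > 0 ->
  (* for each tau > 0, ut tau lies in (-mu,mu)^p and solves the system *)
  (forall tau, tau > 0 ->
     (forall j, (j < p)%nat -> - mu < ut tau j < mu) /\
     (forall j, (j < p)%nat ->
        (mu ^ 2 - (ut tau j) ^ 2) * matvec p Ci (fun k => w k - ut tau k) j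
          - ut tau j / tau = 0)) ->
  (* ... and it is the unique such solution *)
  (forall tau (v : nat -> R), tau > 0 ->
     (forall j, (j < p)%nat -> - mu < v j < mu) ->
     (forall j, (j < p)%nat ->
        (mu ^ 2 - (v j) ^ 2) * matvec p Ci (fun k => w k - v k) j - v j / tau = 0) ->
     forall j, (j < p)%nat -> v j = ut tau j) ->
  (* uh = lim_{tau -> infinity} ut tau *)
  (forall j, (j < p)%nat -> forall eps, eps > 0 ->
     exists T, forall tau, tau > T -> Rabs (ut tau j - uh j) < eps) ->
  let xt := fun tau => matvec p Ci (fun k => w k - ut tau k) in
  let xh := matvec p Ci (fun k => w k - uh k) in
  forall j, (j < p)%nat ->
    (* j in I *)
    (xh j <> 0 ->
       bigO_infty (fun tau => tau * (mu ^ 2 - (ut tau j) ^ 2) ^ 2) (fun tau => / tau)) /\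
    (* j in I^c_t : tau (mu^2-u^2)^2 = O((tau x_tau,j^2)^{-1}), stated multiplied out *)
    (xh j = 0 -> Rabs (uh j) = mu ->
       bigO_infty (fun tau => tau * (mu ^ 2 - (ut tau j) ^ 2) ^ 2 * (tau * (xt tau j) ^ 2))
                  (fun _ => 1)) /\
    (* j in I^c_nt *)
    (xh j = 0 -> Rabs (uh j) < mu ->
       bigO_infty (fun tau => tau * (mu ^ 2 - (ut tau j) ^ 2) ^ 2) (fun tau => tau)).
Proof.
  intros _ _ _ Hsol _ Hconv xt xh j Hj.
  assert (Hbox : forall tau, tau > 0 -> - mu < ut tau j < mu)
    by (intros tau Htau; apply (proj1 (Hsol tau Htau)), Hj).
  assert (Hid : forall tau, tau > 0 -> tau * (mu ^ 2 - ut tau j ^ 2) * xt tau j = ut tau j)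
    by (intros tau Htau; apply stationary_scaled_gap, (proj2 (Hsol tau Htau)), Hj; lra).
  assert (Hgap0 : forall tau, tau > 0 ->
                    Rabs (tau * (mu ^ 2 - ut tau j ^ 2) ^ 2) = tau * (mu ^ 2 - ut tau j ^ 2) ^ 2)
    by (intros tau Htau; apply Rabs_right, Rle_ge, Rmult_le_pos; [lra | apply pow2_ge_0]).
  split; [|split].
  - intros Hxh.
    assert (Hxcvg : cvg_infty (fun tau => xt tau j) (xh j)).
    { apply cvg_infty_matvec; intros k Hk; exact (cvg_infty_const_minus (w k) (fun tau => ut tau k) _ (Hconv k Hk)). }
    destruct (cvg_infty_sq_bounded_below _ _ Hxcvg Hxh) as [T HT].
    assert (Hc : xh j ^ 2 / 4 > 0) by (pose proof (Rsqr_pos_lt _ Hxh); unfold Rsqr in *; lra).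
    exists (mu ^ 2 / (xh j ^ 2 / 4)), (Rmax T 0); intros tau Htau.
    assert (Htau0 : tau > 0) by (pose proof (Rmax_r T 0); lra).
    pose proof (Rinv_0_lt_compat tau Htau0).
    rewrite (Rabs_right (/ tau)), Hgap0 by lra.
    apply (gap_sq_bound_inv mu _ _ _ Htau0 (Hbox tau Htau0) (Hid tau Htau0)); auto.
    apply HT; pose proof (Rmax_l T 0); lra.
  - intros _ _; exists (mu ^ 2), 0; intros tau Htau.
    pose proof (gap_sq_mul_tau_sq_bound mu _ _ _ (Hbox tau Htau) (Hid tau Htau)).
    rewrite Rabs_R1, Rmult_1_r, Rabs_right; [assumption|].
    apply Rle_ge, Rmult_le_pos; apply Rmult_le_pos; try apply pow2_ge_0; lra.
  - intros _ _; exists (mu ^ 4), 0; intros tau Htau.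
    pose proof (gap_sq_bound mu _ tau Htau (Hbox tau Htau)).
    rewrite (Rabs_right tau), Hgap0 by lra; assumption.
Qed.
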